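(* Let $\Lambda=\mathrm{diag}(\lambda_1,\dots,\lambda_n)$ with $\lambda_1<\dots<\lambda_n$ and let $f:\mathbb{R}\to\mathbb{R}$ satisfy $f(\lambda_i)\neq 0$ for all $i$ and $|f(\lambda_i)|\neq|f(\lambda_j)|$ for $i\neq j$. Let $F:\mathcal{T}_\Lambda\to\mathcal{T}_\Lambda$ be the QR step induced by $f$. Let $\mathcal{K}\subset\mathcal{T}_\Lambda$ be a compact set containing no diagonal matrices. Then there exists $K>0$ such that for all $T\in\mathcal{T}_\Lambda$, $$\#\{k\in\mathbb{N} : F^k(T)\in\mathcal{K}\}<K.$$
   Context: $\mathcal{T}_\Lambda$ denotes the set of real symmetric tridiagonal $n\times n$ matrices with spectrum $\{\lambda_1,\dots,\lambda_n\}$. For an invertible real matrix $A$, write uniquely $A=\mathbf{Q}(A)\mathbf{R}(A)$ with $\mathbf{Q}(A)$ orthogonal and $\mathbf{R}(A)$ upper triangular with positive diagonal. The QR step induced by $f$ is $F(T)=\mathbf{Q}(f(T))^{*}\,T\,\mathbf{Q}(f(T))$, where $f(T)$ is defined by functional calculus. *)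

From HB Require Import structures.
From mathcomp Require Import all_boot all_order all_algebra.
From mathcomp Require Import all_classical all_reals all_analysis.
From Stdlib Require Import ClassicalEpsilon.
Set Implicit Arguments. Unset Strict Implicit. Unset Printing Implicit Defensive.
Import Order.TTheory GRing.Theory Num.Theory.
Import numFieldNormedType.Exports.
Local Open Scope ring_scope.

Section Defs.
Variables (R : realType) (n : nat).

Definition symmetric_mx (A : 'M[R]_n) : Prop := A^T = A.

Definition tridiagonal_mx (A : 'M[R]_n) : Prop :=
  forall i j : 'I_n, ((i.+1 < j)%N \/ (j.+1 < i)%N) -> A i j = 0.

Definition orthogonal_mx (Q : 'M[R]_n) : Prop := Q^T *m Q = 1%:M.

Definition upper_pos_mx (Rm : 'M[R]_n) : Prop :=
  (forall i j : 'I_n, (j < i)%N -> Rm i j = 0) /\ (forall i : 'I_n, 0 < Rm i i).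

Definition TLambda (lam : 'I_n -> R) : set 'M[R]_n :=
  [set A | symmetric_mx A /\ tridiagonal_mx A /\
           (forall a : R, eigenvalue A a <-> exists i : 'I_n, a = lam i)].

(* functional calculus for real symmetric matrices:
   if A = Q^T diag(d) Q with Q orthogonal, then f(A) = Q^T diag(f d) Q.
   (Independent of the chosen diagonalization.) *)
Definition orth_diag (A : 'M[R]_n) (p : 'M[R]_n * 'rV[R]_n) : Prop :=
  orthogonal_mx p.1 /\ A = p.1^T *m diag_mx p.2 *m p.1.

Definition funcalc (f : R -> R) (A : 'M[R]_n) : 'M[R]_n :=
  let p := epsilon (inhabits (1%:M, 0)) (orth_diag A) in
  p.1^T *m diag_mx (map_mx f p.2) *m p.1.

(* Q factor of the QR decomposition A = Q R with Q orthogonal, R upper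
   triangular with positive diagonal (unique for invertible A). *)
Definition qrQ (A : 'M[R]_n) : 'M[R]_n :=
  epsilon (inhabits 1%:M)
    (fun Q => orthogonal_mx Q /\ exists Rm, upper_pos_mx Rm /\ A = Q *m Rm).

Definition QRstep (f : R -> R) (T : 'M[R]_n) : 'M[R]_n :=
  let Q := qrQ (funcalc f T) in Q^T *m T *m Q.

End Defs.

(* Since the eigenvalues are distinct, f(T) = p(T) for an interpolating
   polynomial p, and F(T) = Q^T T Q where f(T) = Q R.  Then f(T)^2 = R^T R and
   f(F(T))^2 = R R^T, so the potential  sum_k k * (f(T)^2)_kk  drops at each step
   by at least the off-diagonal mass of the upper triangular factor R, while it
   always lies in [0, n * sum_i f(lambda_i)^2].  On the compact set K this mass
   is bounded below by some d > 0: it is continuous in (T, Q) over K x O(n) and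
   vanishes only if f(T)^2 is diagonal; its diagonal then consists of the
   distinct numbers f(lambda_i)^2, and T, which commutes with f(T)^2, would be
   diagonal.  Hence at most n * sum_i f(lambda_i)^2 / d iterates lie in K. *)

From HB Require Import structures.
From mathcomp Require Import all_boot all_order all_algebra.
From mathcomp Require Import all_classical all_reals all_analysis.
From mathcomp Require Import ring lra.
From Stdlib Require Import ClassicalEpsilon.
Set Implicit Arguments. Unset Strict Implicit. Unset Printing Implicit Defensive.
Import Order.TTheory GRing.Theory Num.Theory.
Import numFieldNormedType.Exports.
Local Open Scope ring_scope.

Section Dot.
Variables (R : realType) (n : nat).
Implicit Types u v w : 'rV[R]_n.

Definition dot u v : R := (u *m v^T) 0 0.

Lemma dotE u v : dot u v = \sum_i u 0 i * v 0 i.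
Proof. by rewrite /dot mxE; apply: eq_bigr => i _; rewrite mxE. Qed.

Lemma dotC u v : dot u v = dot v u.
Proof. by rewrite !dotE; apply: eq_bigr => i _; rewrite mulrC. Qed.

Lemma dotDl u v w : dot (u + v) w = dot u w + dot v w.
Proof. by rewrite /dot mulmxDl !mxE. Qed.

Lemma dotBl u v w : dot (u - v) w = dot u w - dot v w.
Proof. by rewrite /dot mulmxBl !mxE. Qed.

Lemma dotZl a u w : dot (a *: u) w = a * dot u w.
Proof. by rewrite /dot -scalemxAl mxE. Qed.

Lemma dot_suml (I : finType) (P : pred I) (F : I -> 'rV[R]_n) w :
  dot (\sum_(i | P i) F i) w = \sum_(i | P i) dot (F i) w.
Proof. by rewrite /dot mulmx_suml summxE. Qed.

Lemma dotDr u v w : dot w (u + v) = dot w u + dot w v.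
Proof. by rewrite dotC dotDl !(dotC w). Qed.

Lemma dotZr a u w : dot w (a *: u) = a * dot w u.
Proof. by rewrite dotC dotZl dotC. Qed.

Lemma dot_sumr (I : finType) (P : pred I) (F : I -> 'rV[R]_n) w :
  dot w (\sum_(i | P i) F i) = \sum_(i | P i) dot w (F i).
Proof. by rewrite dotC dot_suml; apply: eq_bigr => i _; rewrite dotC. Qed.

Lemma dot_ge0 u : 0 <= dot u u.
Proof. by rewrite dotE sumr_ge0 // => i _; rewrite -expr2 sqr_ge0. Qed.

Lemma dot_eq0 u : (dot u u == 0) = (u == 0).
Proof.
apply/idP/eqP => [|->]; last by rewrite /dot mul0mx mxE.
rewrite dotE psumr_eq0 => [/allP u0|i _]; last by rewrite -expr2 sqr_ge0.
apply/rowP => i; rewrite mxE; have := u0 i (mem_index_enum _).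
by rewrite /= mulf_eq0 orbb => /eqP.
Qed.

Lemma dot_gt0 u : u != 0 -> 0 < dot u u.
Proof. by move=> u0; rewrite lt_def dot_eq0 u0 dot_ge0. Qed.

Lemma mulmx_trE m (A B : 'M[R]_(m, n)) i j :
  (A *m B^T) i j = dot (row i A) (row j B).
Proof. by rewrite dotE mxE; apply: eq_bigr => k _; rewrite !mxE. Qed.

Lemma dot_normalize u : u != 0 ->
  dot ((Num.sqrt (dot u u))^-1 *: u) ((Num.sqrt (dot u u))^-1 *: u) = 1.
Proof.
move=> u0; have uu_gt0 := dot_gt0 u0.
by rewrite dotZl dotZr mulrA -invfM -expr2 sqr_sqrtr ?ltW // mulVf ?gt_eqF.
Qed.

Lemma orthonormal_rows_orthogonal (U : 'M[R]_n) :
  (forall i j, dot (row i U) (row j U) = (i == j)%:R) -> orthogonal_mx U^T.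
Proof.
move=> ON; rewrite /orthogonal_mx trmxK.
by apply/matrixP => i j; rewrite mulmx_trE ON mxE.
Qed.

Lemma dot_residual_orth (I : finType) (P : pred I) (u : I -> 'rV[R]_n) b :
  (forall i j, P i -> P j -> dot (u i) (u j) = (i == j)%:R) ->
  forall j, P j -> dot (b - \sum_(i | P i) dot (u i) b *: u i) (u j) = 0.
Proof.
move=> uON j Pj; rewrite dotBl dot_suml (bigD1 j) //= dotZl uON // eqxx mulr1.
rewrite big1 => [|i /andP[Pi ij]]; last by rewrite dotZl uON // (negbTE ij) mulr0.
by rewrite addr0 dotC subrr.
Qed.

End Dot.

Lemma ltnS_ord n (k i : 'I_n) : (i < k.+1)%N -> i = k \/ (i < k)%N.
Proof. by rewrite ltnS leq_eqVlt => /orP[/eqP/val_inj|]; [left|right]. Qed.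

Lemma ltn_ord_eqF n (i j : 'I_n) : (i < j)%N -> (i == j) = false.
Proof. by move=> ij; rewrite -val_eqE ltn_eqF. Qed.

Lemma big_ord_ltS (V : nmodType) n (k : 'I_n) (F : 'I_n -> V) :
  \sum_(i < n | (i < k.+1)%N) F i = F k + \sum_(i < n | (i < k)%N) F i.
Proof.
rewrite (bigD1 k) ?ltnSn //; congr (_ + _); apply: eq_bigl => i.
by rewrite ltnS ltn_neqAle andbC.
Qed.

Section GramSchmidt.
Variables (R : realType) (n : nat) (B : 'M[R]_n).
Hypothesis B_unit : B \in unitmx.
Implicit Types (U L : 'M[R]_n) (k : nat).

(* [L] expresses [row i U] through the first [i + 1] rows of [B]; since [B] is
   invertible this keeps the next Gram-Schmidt residual nonzero. *)
Definition gram_schmidt_inv k U L :=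
  [/\ forall i j : 'I_n, (i < k)%N -> (j < k)%N ->
        dot (row i U) (row j U) = (i == j)%:R,
      forall i j : 'I_n, (i < k)%N -> (j < i)%N -> dot (row i U) (row j B) = 0,
      forall i : 'I_n, (i < k)%N -> 0 < dot (row i U) (row i B),
      forall j : 'I_n, (j < k)%N ->
        row j B = \sum_(i < n | (i < k)%N) dot (row i U) (row j B) *: row i U &
      forall i : 'I_n, (i < k)%N ->
        row i U = row i L *m B /\ forall j : 'I_n, (i < j)%N -> L i j = 0].

Section Step.
Variables (k : 'I_n) (U L : 'M[R]_n).
Hypothesis GS : gram_schmidt_inv k U L.

Let x : 'rV[R]_n :=
  'e_k - \sum_(i < n | (i < k)%N) dot (row i U) (row k B) *: row i L.
Let w := row k B - \sum_(i < n | (i < k)%N) dot (row i U) (row k B) *: row i U.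

Let w_mulmx : w = x *m B.
Proof.
have [_ _ _ _ UL] := GS.
rewrite /w /x mulmxBl -rowE mulmx_suml; congr (_ - _); apply: eq_bigr => i ik.
by rewrite -scalemxAl (UL i ik).1.
Qed.

Let w_neq0 : w != 0.
Proof.
have [_ _ _ _ UL] := GS.
rewrite w_mulmx; apply: contraTneq isT => /(congr1 (mulmxr (invmx B))) /=.
rewrite mulmxK // mul0mx => /rowP /(_ k); rewrite !mxE summxE big1 => [|i ik].
  by rewrite !eqxx /= subr0 => /eqP; rewrite oner_eq0.
by rewrite !mxE (UL i ik).2 // mulr0.
Qed.

Let w_orthU (i : 'I_n) : (i < k)%N -> dot w (row i U) = 0.
Proof. by have [ON _ _ _ _] := GS; apply: dot_residual_orth => j l; apply: ON. Qed.

Let w_orthB (j : 'I_n) : (j < k)%N -> dot w (row j B) = 0.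
Proof.
have [_ _ _ span _] := GS.
by move=> jk; rewrite (span j jk) dot_sumr big1 // => i ik; rewrite dotZr w_orthU ?mulr0.
Qed.

Let w_dotB : dot w (row k B) = dot w w.
Proof.
rewrite -[in LHS](subrK (\sum_(i < n | (i < k)%N) dot (row i U) (row k B) *: row i U) (row k B)).
by rewrite -/w dotDr dot_sumr big1 ?addr0 // => i ik; rewrite dotZr w_orthU ?mulr0.
Qed.

Let r := Num.sqrt (dot w w).
Let u := r^-1 *: w.

Let r_gt0 : 0 < r.
Proof. by rewrite sqrtr_gt0 (dot_gt0 w_neq0). Qed.

Let r_neq0 : r != 0.
Proof. by rewrite gt_eqF. Qed.

Let rr : r * r = dot w w.
Proof. by rewrite -expr2 sqr_sqrtr // dot_ge0. Qed.

Let u_unit : dot u u = 1.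
Proof. by rewrite dotZl dotZr -rr; field. Qed.

Let u_orthU (i : 'I_n) : (i < k)%N -> dot u (row i U) = 0.
Proof. by move=> ik; rewrite dotZl w_orthU ?mulr0. Qed.

Let u_dotB (j : 'I_n) : (j <= k)%N -> dot u (row j B) = (j == k :> nat)%:R * r.
Proof.
rewrite leq_eqVlt => /orP[/eqP/val_inj ->|jk]; last first.
  by rewrite dotZl w_orthB // mulr0 ltn_eqF // mul0r.
by rewrite dotZl w_dotB eqxx mul1r -rr mulrA mulVf ?mul1r.
Qed.

Lemma gram_schmidt_step : exists U' L', gram_schmidt_inv k.+1 U' L'.
Proof.
have [ON tri pos span UL] := GS.
pose U' := \matrix_i (if i == k then u else row i U).
pose L' := \matrix_i (if i == k then r^-1 *: x else row i L).
have rowU' (i : 'I_n) : row i U' = if i == k then u else row i U by rewrite rowK.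
have U'_lt (i : 'I_n) : (i < k)%N -> row i U' = row i U.
  by move=> ik; rewrite rowU' ltn_ord_eqF.
exists U', L'; split.
- move=> i j /ltnS_ord[->|ik] /ltnS_ord[->|jk].
  + by rewrite rowU' eqxx u_unit.
  + by rewrite rowU' eqxx U'_lt // u_orthU // eq_sym ltn_ord_eqF.
  + by rewrite (rowU' k) eqxx U'_lt // dotC u_orthU // ltn_ord_eqF.
  + by rewrite !U'_lt // ON.
- move=> i j /ltnS_ord[->|ik] ji; last by rewrite U'_lt // tri.
  by rewrite rowU' eqxx (u_dotB (ltnW ji)) ltn_eqF ?mul0r.
- move=> i /ltnS_ord[->|ik]; last by rewrite U'_lt // pos.
  by rewrite rowU' eqxx (u_dotB (leqnn k)) eqxx mul1r r_gt0.
- move=> j jk1; rewrite big_ord_ltS rowU' eqxx (u_dotB jk1).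
  rewrite (eq_bigr (fun i => dot (row i U) (row j B) *: row i U)) => [|i ik]; last first.
    by rewrite U'_lt.
  case: (ltnS_ord jk1) => [->|jk]; last by rewrite ltn_eqF // mul0r scale0r add0r; exact: span.
  by rewrite eqxx mul1r scalerA mulfV // scale1r /w subrK.
- move=> i /ltnS_ord[->|ik]; last first.
    rewrite U'_lt // rowK ltn_ord_eqF //; split=> [|j ij]; first exact: (UL i ik).1.
    by rewrite mxE ltn_ord_eqF // mxE (UL i ik).2.
  rewrite rowU' rowK eqxx -scalemxAl -w_mulmx; split=> // j kj.
  rewrite mxE eqxx !mxE summxE big1 => [|l lk]; last first.
    by rewrite !mxE (UL l lk).2 ?mulr0 // (ltn_trans lk).
  by rewrite eqxx [j == k]eq_sym (ltn_ord_eqF kj) /= subr0 mulr0.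
Qed.

End Step.

Lemma gram_schmidt_exists k : (k <= n)%N -> exists U L, gram_schmidt_inv k U L.
Proof.
elim: k => [|k IH] kn.
  by exists 0, 0; split => [i j|i j|i|j|i]; rewrite ltn0.
have [U [L GS]] := IH (ltnW kn).
exact: (@gram_schmidt_step (Ordinal kn) U L).
Qed.

End GramSchmidt.

Lemma qr_exists (R : realType) n (A : 'M[R]_n) : A \in unitmx ->
  exists Q, orthogonal_mx Q /\ exists Rm, upper_pos_mx Rm /\ A = Q *m Rm.
Proof.
move=> Au; have ATu : A^T \in unitmx by rewrite unitmx_tr.
have [U [_ [ON tri pos _ _]]] := gram_schmidt_exists ATu (leqnn n).
have oUt : orthogonal_mx U^T by apply: orthonormal_rows_orthogonal => i j; apply: ON.
exists U^T; split => //; exists (U *m A); split.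
  by rewrite -[A in U *m A]trmxK; split => [i j ji|i]; rewrite mulmx_trE; [exact: tri | exact: pos].
by have := mulmx1C oUt; rewrite trmxK mulmxA => ->; rewrite mul1mx.
Qed.

Section Spectrum.
Variables (R : realType) (n : nat).
Implicit Types (A P Q : 'M[R]_n) (a : R).

Lemma orthogonal_mxC Q : orthogonal_mx Q -> Q *m Q^T = 1%:M.
Proof. exact: mulmx1C. Qed.

Lemma orthogonal_mx_unit Q : orthogonal_mx Q -> Q \in unitmx.
Proof. by move=> /orthogonal_mxC /mulmx1_unit[]. Qed.

Lemma eigenvalue_orth_conj Q A a : orthogonal_mx Q ->
  eigenvalue (Q^T *m A *m Q) a <-> eigenvalue A a.
Proof.
move=> oQ; have QQt := orthogonal_mxC oQ.
split => /eigenvalueP [v vA v0]; apply/eigenvalueP.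
- exists (v *m Q^T); first by rewrite scalemxAl -vA -!mulmxA QQt mulmx1.
  by apply: contra v0 => /eqP vQ; rewrite -[v]mulmx1 -oQ mulmxA vQ mul0mx.
- exists (v *m Q); first by rewrite scalemxAl -vA -!mulmxA (mulmxA Q) QQt mul1mx.
  by apply: contra v0 => /eqP vQ; rewrite -[v]mulmx1 -QQt mulmxA vQ mul0mx.
Qed.

Lemma eigenvalue_diag_mx (d : 'rV[R]_n) a :
  eigenvalue (diag_mx d) a <-> exists j, a = d 0 j.
Proof.
split=> [/eigenvalueP [v vd v0]|[j ->]]; last first.
  apply/eigenvalueP; exists 'e_j; first by rewrite -rowE row_diag_mx.
  by apply/negP => /eqP/rowP/(_ j); rewrite !mxE !eqxx => /eqP; rewrite oner_eq0.
have [j vj] : exists j, v 0 j != 0.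
  apply/existsP; apply: contraR v0 => /existsPn vj0; apply/eqP/rowP => j.
  by have /negPn/eqP := vj0 j; rewrite mxE.
exists j; move/rowP/(_ j): vd; rewrite mul_mx_diag !mxE mulrC.
by move/(mulIf vj).
Qed.

Lemma orth_diag_eigenvalue A P (d : 'rV[R]_n) j :
  orth_diag A (P, d) -> eigenvalue A (d 0 j).
Proof.
move=> [oP /= ->].
by apply/(eigenvalue_orth_conj _ _ oP)/eigenvalue_diag_mx; exists j.
Qed.

Lemma symmetric_eigenvector_orth A u v a b : symmetric_mx A ->
  u *m A = a *: u -> v *m A = b *: v -> a != b -> dot u v = 0.
Proof.
move=> sA uA vA ab.
have : dot (u *m A) v = dot u (v *m A) by rewrite /dot trmx_mul sA mulmxA.
rewrite uA vA dotZl dotZr => /eqP; rewrite -subr_eq0 -mulrBl mulf_eq0 subr_eq0.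
by rewrite (negbTE ab) => /eqP.
Qed.

Variable lam : 'I_n -> R.

Definition sym_spectrum A :=
  symmetric_mx A /\ forall a, eigenvalue A a <-> exists i, a = lam i.

Lemma TLambda_sym_spectrum A : TLambda lam A -> sym_spectrum A.
Proof. by case=> sA [_ eA]. Qed.

Lemma sym_spectrum_orth_conj Q A : orthogonal_mx Q ->
  sym_spectrum A -> sym_spectrum (Q^T *m A *m Q).
Proof.
move=> oQ [sA eA]; split; first by rewrite /symmetric_mx !trmx_mul trmxK sA mulmxA.
by move=> a; apply: iff_trans (eA a); apply: eigenvalue_orth_conj.
Qed.

Lemma sym_spectrum_orth_diag A P (d : 'rV[R]_n) j :
  sym_spectrum A -> orth_diag A (P, d) -> exists i, d 0 j = lam i.
Proof. by move=> [_ eA] /(orth_diag_eigenvalue j) /eA. Qed.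

Hypothesis lam_inj : injective lam.

Lemma sym_spectrum_diag A : sym_spectrum A -> exists P, orth_diag A (P, \row_i lam i).
Proof.
move=> [sA eA].
have /fin_all_exists[v vP] :
    forall i, exists v : 'rV[R]_n, v *m A = lam i *: v /\ v != 0.
  move=> i; have /eigenvalueP[v vA v0] : eigenvalue A (lam i) by apply/eA; exists i.
  by exists v.
pose P := \matrix_i ((Num.sqrt (dot (v i) (v i)))^-1 *: v i).
have row_eigen i : row i P *m A = lam i *: row i P.
  by rewrite rowK -scalemxAl (vP i).1 !scalerA mulrC.
have oPt : orthogonal_mx P^T.
  apply: orthonormal_rows_orthogonal => i j; have [->|ij] := eqVneq i j.
    by rewrite rowK dot_normalize ?(vP j).2.
  by rewrite (symmetric_eigenvector_orth sA (row_eigen i) (row_eigen j)) ?(inj_eq lam_inj).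
have PPt : P *m P^T = 1%:M by rewrite -[P in P *m _]trmxK.
exists P; split; first exact: mulmx1C.
have PA : P *m A = diag_mx (\row_i lam i) *m P.
  by apply/row_matrixP => i; rewrite !row_mul row_eigen row_diag_mx mxE -scalemxAl -rowE.
by rewrite /= -mulmxA -PA mulmxA (mulmx1C PPt) mul1mx.
Qed.

End Spectrum.

Lemma interpolation (R : fieldType) m (x : 'I_m -> R) (g : R -> R) :
  injective x -> exists p : {poly R}, forall i, p.[x i] = g (x i).
Proof.
move=> x_inj; pose V := Vandermonde m (\row_j x j).
have V_unit : V \in unitmx.
  rewrite unitmxE det_Vandermonde unitfE; apply/prodf_neq0 => i _.
  apply/prodf_neq0 => j ij; rewrite !mxE subr_eq0 (inj_eq x_inj) eq_sym.
  by rewrite ltn_ord_eqF.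
pose c := (\row_i g (x i)) *m invmx V.
exists (\sum_(k < m) c 0 k *: 'X^k) => i; rewrite horner_sum.
have /rowP/(_ i) := mulmxKV V_unit (\row_i g (x i)).
rewrite !mxE => <-; apply: eq_bigr => k _.
by rewrite hornerZ hornerXn !mxE.
Qed.

Section HornerMx.
Variables (R : realType) (n : nat).
Implicit Types (A Q : 'M[R]_n.+1) (p : {poly R}).

Lemma horner_mx_orth_conj Q A p : orthogonal_mx Q ->
  horner_mx (Q^T *m A *m Q) p = Q^T *m horner_mx A p *m Q.
Proof.
move=> oQ; have Q_unit := orthogonal_mx_unit oQ.
have <- : invmx Q = Q^T by rewrite -[Q^T]mulmx1 -(mulmxV Q_unit) mulmxA oQ mul1mx.
exact: horner_mx_uconjC.
Qed.

Lemma trmx_horner_mx A p : (horner_mx A p)^T = horner_mx A^T p.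
Proof.
elim/poly_ind: p => [|p c IH]; first by rewrite !rmorph0 trmx0.
rewrite !(rmorphD, rmorphM) /= !(horner_mx_X, horner_mx_C) linearD /= tr_scalar_mx.
by rewrite -!mulmxE trmx_mul IH (comm_mx_horner p (erefl : comm_mx A^T A^T)).
Qed.

Lemma eigenvector_horner_mx A (v : 'rV[R]_n.+1) a p :
  v *m A = a *: v -> v *m horner_mx A p = p.[a] *: v.
Proof.
move=> vA; elim/poly_ind: p => [|p c IH]; first by rewrite rmorph0 horner0 mulmx0 scale0r.
rewrite !(rmorphD, rmorphM) /= !(horner_mx_X, horner_mx_C) hornerMXaddC.
by rewrite mulmxDr -mulmxE mulmxA IH -scalemxAl vA scalerA mul_mx_scalar scalerDl.
Qed.

Lemma eigenvalue_horner_mx A a p : eigenvalue A a -> eigenvalue (horner_mx A p) p.[a].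
Proof.
move=> /eigenvalueP[v vA v0]; apply/eigenvalueP; exists v => //.
exact: eigenvector_horner_mx.
Qed.

Variables (lam : 'I_n.+1 -> R) (f : R -> R) (p : {poly R}).
Hypothesis lam_inj : injective lam.
Hypothesis p_interp : forall i, p.[lam i] = f (lam i).

Lemma funcalc_horner T : sym_spectrum lam T -> funcalc f T = horner_mx T p.
Proof.
move=> sT; have [P0 od0] := sym_spectrum_diag lam_inj sT.
have := epsilon_spec (inhabits (1%:M, 0)) (orth_diag T) (ex_intro _ _ od0).
rewrite /funcalc /=; case: (epsilon _ _) => P d od; have [oP /= TE] := od.
rewrite TE horner_mx_orth_conj // horner_mx_diag.
congr (_ *m diag_mx _ *m _); apply/rowP => j; rewrite !mxE.
by have [i ->] := sym_spectrum_orth_diag j sT od; rewrite p_interp.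
Qed.

Lemma horner_mx_unit T : sym_spectrum lam T -> (forall i, f (lam i) != 0) ->
  horner_mx T p \in unitmx.
Proof.
move=> sT f_neq0; have [P [oP /= ->]] := sym_spectrum_diag lam_inj sT.
have [Pt_unit P_unit] := mulmx1_unit oP.
rewrite horner_mx_orth_conj // horner_mx_diag !unitmx_mul Pt_unit P_unit andbT.
rewrite unitmxE det_diag unitfE; apply/prodf_neq0 => i _.
by rewrite !mxE p_interp.
Qed.

End HornerMx.

Lemma fin_cover_inj (T : finType) (U : Type) (e h : T -> U) :
  injective h -> (forall i, exists k, h i = e k) -> injective e.
Proof.
move=> h_inj /fin_all_exists[s hs].
have [s' ss' s's] : bijective s by apply: injF_bij => i j eq_s; apply: h_inj; rewrite !hs eq_s.
by move=> k l ekl; rewrite -[k]s's -[l]s's; congr s; apply: h_inj; rewrite !hs !s's ekl.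
Qed.

Lemma comm_diag_mx_is_diag (R : idomainType) n (e : 'rV[R]_n) (T : 'M[R]_n) :
  injective (e 0) -> T *m diag_mx e = diag_mx e *m T -> is_diag_mx T.
Proof.
move=> e_inj /matrixP Te; apply/is_diag_mxP => i j ij.
move: (Te i j); rewrite mul_mx_diag mul_diag_mx !mxE => /eqP.
rewrite mulrC -subr_eq0 -mulrBl mulf_eq0 subr_eq0 => /orP[/eqP/e_inj ji|/eqP //].
by move: ij; rewrite ji eqxx.
Qed.

Section Potential.
Variables (R : realDomainType) (n : nat).
Implicit Types M : 'M[R]_n.

Definition wtrace M := \sum_(k < n) k%:R * M k k.

Definition offdiag M := \sum_(k < n) \sum_(j < n | k != j) M k j ^+ 2.

Lemma offdiag_ge0 M : 0 <= offdiag M.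
Proof. by do 2!apply: sumr_ge0 => ? _; rewrite sqr_ge0. Qed.

Lemma offdiag_eq0 M : offdiag M = 0 -> is_diag_mx M.
Proof.
move=> /eqP; rewrite psumr_eq0 => [/allP M0|k _]; last first.
  by apply: sumr_ge0 => j _; rewrite sqr_ge0.
apply/is_diag_mxP => k j kj; move: (M0 k (mem_index_enum _)) => /=.
rewrite psumr_eq0 => [/allP/(_ j (mem_index_enum _))|l _]; last exact: sqr_ge0.
by rewrite -val_eqE kj sqrf_eq0 => /eqP.
Qed.

Lemma mul_tr_diag_ge0 M k : 0 <= (M *m M^T) k k.
Proof. by rewrite mxE sumr_ge0 // => j _; rewrite mxE -expr2 sqr_ge0. Qed.

Lemma wtrace_mul_tr_ge0 M : 0 <= wtrace (M *m M^T).
Proof. by rewrite sumr_ge0 // => k _; rewrite mulr_ge0 ?mul_tr_diag_ge0. Qed.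

Lemma wtrace_mul_tr_le M : wtrace (M *m M^T) <= n%:R * \tr (M *m M^T).
Proof.
rewrite /wtrace /mxtrace mulr_sumr; apply: ler_sum => k _.
by rewrite ler_wpM2r ?mul_tr_diag_ge0 // ler_nat ltnW.
Qed.

(* Multiplying out both sides, the weight of [M k j ^+ 2] is [k] on the left
   and [j >= k + 1] on the right whenever [j != k]. *)
Lemma wtrace_upper_gap M : (forall i j : 'I_n, (j < i)%N -> M i j = 0) ->
  wtrace (M *m M^T) + offdiag M <= wtrace (M^T *m M).
Proof.
move=> M_upper.
have -> : wtrace (M^T *m M) = \sum_(k < n) \sum_(j < n) j%:R * M k j ^+ 2.
  rewrite /wtrace exchange_big; apply: eq_bigr => j _; rewrite mxE mulr_sumr.
  by apply: eq_bigr => k _; rewrite !mxE expr2.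
have -> : wtrace (M *m M^T) = \sum_(k < n) \sum_(j < n) k%:R * M k j ^+ 2.
  rewrite /wtrace; apply: eq_bigr => k _; rewrite mxE mulr_sumr.
  by apply: eq_bigr => j _; rewrite !mxE expr2.
rewrite /offdiag -big_split /=; apply: ler_sum => k _.
rewrite [X in X + _](bigID (fun j => k != j)) [X in _ <= X](bigID (fun j => k != j)) /=.
rewrite -addrA [X in _ + X]addrC addrA; apply: lerD; last by apply: ler_sum => j /negPn/eqP ->.
rewrite -big_split /=; apply: ler_sum => j kj.
case: (ltngtP j k) => [jk|kj'|/val_inj jk]; last by rewrite jk eqxx in kj.
  by rewrite M_upper // expr2 !mulr0 addr0.
by rewrite -[X in _ + X]mul1r -mulrDl ler_wpM2r ?sqr_ge0 // -[1]/(1%:R) -natrD ler_nat addn1.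
Qed.

End Potential.

Local Open Scope classical_set_scope.

Lemma compact_gt0_lower_bound (X : topologicalType) (R : realType) (S : set X)
    (g : X -> R) :
  compact S -> continuous g -> (forall x, S x -> 0 < g x) ->
  exists2 d, 0 < d & forall x, S x -> d <= g x.
Proof.
move=> cS cg g_gt0; have [[x0 Sx0]|S0] := pselect (S !=set0); last first.
  by exists 1 => // x Sx; exfalso; apply: S0; exists x.
have [m /set_mem Sm m_min] := compact_EVT_min (ex_intro _ x0 Sx0) cS (continuous_subspaceT cg).
by exists (g m); [exact: g_gt0 | move=> x Sx; apply: m_min; rewrite inE].
Qed.

Section EntrywiseContinuity.
Variables (R : realType) (Y : topologicalType).

Definition continuous_entries m k (g : Y -> 'M[R]_(m, k)) :=
  forall i j, continuous (fun y => g y i j).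

Lemma continuous_entries_continuous m k (g : Y -> 'M[R]_(m, k)) :
  continuous_entries g -> continuous g.
Proof.
move=> cg y A /= [P nP sPA].
have : \forall z \near y, forall ij : 'I_m * 'I_k, P ij.1 ij.2 (g z ij.1 ij.2).
  by apply: filter_forall => -[i j] /=; exact: cg (nP i j).
by apply: filterS => z gz; apply: sPA => i j; exact: (gz (i, j)).
Qed.

Lemma continuous_sumr (I : finType) (P : pred I) (F : I -> Y -> R) :
  (forall i, P i -> continuous (F i)) -> continuous (fun y => \sum_(i | P i) F i y).
Proof. exact/continuous_big/add_continuous. Qed.

Lemma continuous_entries_const m k (M : 'M[R]_(m, k)) : continuous_entries (fun _ => M).
Proof. by move=> i j; exact: cst_continuous. Qed.

Lemma continuous_entriesD m k (g h : Y -> 'M[R]_(m, k)) :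
  continuous_entries g -> continuous_entries h -> continuous_entries (fun y => g y + h y).
Proof.
move=> cg ch i j; have -> : (fun y => (g y + h y) i j) = (fun y => g y i j + h y i j).
  by apply/funext => y; rewrite mxE.
by move=> y; apply: continuousD; [exact: cg | exact: ch].
Qed.

Lemma continuous_entriesM m k l (g : Y -> 'M[R]_(m, k)) (h : Y -> 'M[R]_(k, l)) :
  continuous_entries g -> continuous_entries h -> continuous_entries (fun y => g y *m h y).
Proof.
move=> cg ch i j; have -> : (fun y => (g y *m h y) i j) = (fun y => \sum_r g y i r * h y r j).
  by apply/funext => y; rewrite mxE.
by apply: continuous_sumr => r _ y; apply: continuousM; [exact: cg | exact: ch].
Qed.

Lemma continuous_entries_tr m k (g : Y -> 'M[R]_(m, k)) :
  continuous_entries g -> continuous_entries (fun y => (g y)^T).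
Proof.
move=> cg i j; have -> : (fun y => (g y)^T i j) = (fun y => g y j i).
  by apply/funext => y; rewrite mxE.
exact: cg.
Qed.

Lemma continuous_entries_horner m (g : Y -> 'M[R]_m.+1) (q : {poly R}) :
  continuous_entries g -> continuous_entries (fun y => horner_mx (g y) q).
Proof.
move=> cg; elim/poly_ind: q => [|q c IH].
  by under eq_fun do rewrite rmorph0; exact: continuous_entries_const.
under eq_fun do rewrite rmorphD rmorphM /= horner_mx_X horner_mx_C -mulmxE.
by apply: continuous_entriesD; [exact: continuous_entriesM | exact: continuous_entries_const].
Qed.

Lemma continuous_offdiag m (g : Y -> 'M[R]_m) :
  continuous_entries g -> continuous (fun y => offdiag (g y)).
Proof.
move=> cg; apply: continuous_sumr => k _; apply: continuous_sumr => j _ y.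
by rewrite /GRing.exp /=; apply: continuousM; exact: cg.
Qed.

End EntrywiseContinuity.

Lemma continuous_entries_fst (R : realType) m k m' k' :
  continuous_entries (fun y : 'M[R]_(m, k) * 'M[R]_(m', k') => y.1).
Proof.
move=> i j y; apply: (@continuous_comp _ _ _ fst (fun M : 'M[R]_(m, k) => M i j)).
  exact: cvg_fst.
exact: coord_continuous.
Qed.

Lemma continuous_entries_snd (R : realType) m k m' k' :
  continuous_entries (fun y : 'M[R]_(m, k) * 'M[R]_(m', k') => y.2).
Proof.
move=> i j y; apply: (@continuous_comp _ _ _ snd (fun M : 'M[R]_(m', k') => M i j)).
  exact: cvg_snd.
exact: coord_continuous.
Qed.

Lemma orthogonal_mx_sqr_le1 (R : realType) n (Q : 'M[R]_n) i j :
  orthogonal_mx Q -> Q i j ^+ 2 <= 1.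
Proof.
move=> /matrixP/(_ j j); rewrite !mxE eqxx mulr1n => <-.
rewrite (bigD1 i) //= mxE -expr2 lerDl; apply: sumr_ge0 => l _.
by rewrite mxE -expr2 sqr_ge0.
Qed.

Lemma compact_orthogonal (R : realType) n :
  compact [set Q : 'M[R]_n | orthogonal_mx Q].
Proof.
pose box := [set v : 'rV[R]_(n * n) | forall k, `[-1, 1]%classic (v 0 k)].
pose O := [set v : 'rV[R]_(n * n) | orthogonal_mx (vec_mx v)].
have cvec : continuous_entries (@vec_mx R n n).
  by move=> i j; under eq_fun do rewrite mxE; exact: coord_continuous.
have cbox : compact box := rV_compact (fun _ => @segment_compact R (-1) 1).
have closedO : closed O.
  have c1 : closed [set 1%:M : 'M[R]_n].
    by apply: compact_closed; [exact: norm_hausdorff | exact: compact_set1].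
  have cO := continuous_entriesM (continuous_entries_tr cvec) cvec.
  exact: (continuous_closedP _).1 (continuous_entries_continuous cO) _ c1.
have := compact_closedI cbox closedO.
move/(continuous_compact (continuous_subspaceT (continuous_entries_continuous cvec))).
congr compact; apply/seteqP; split => [Q [v [_ oQ] <-] //|Q oQ].
exists (mxvec Q); last exact: mxvecK.
split=> [k|]; last by rewrite /O /= mxvecK.
case/mxvec_indexP: k => i j; rewrite mxvecE /= in_itv /=.
by have := orthogonal_mx_sqr_le1 i j oQ => Qij; apply/andP; split; nra.
Qed.

Lemma count_descent_le (R : realDomainType) (w : nat -> R) (P : pred nat) (d : R) m :
  (forall k, w k.+1 + d * (P k)%:R <= w k) -> d * (count P (iota 0 m))%:R <= w 0 - w m.
Proof.
move=> w_desc; elim: m => [|m IH]; first by rewrite mulr0 subrr.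
have -> : iota 0 m.+1 = iota 0 m ++ [:: m] by rewrite -addn1 iotaD.
rewrite count_cat /= addn0 natrD mulrDr.
by have := w_desc m; lra.
Qed.

Lemma uniq_size_le_count (P : pred nat) (s : seq nat) : uniq s -> {subset s <= P} ->
  (size s <= count P (iota 0 (\sum_(k <- s) k).+1))%N.
Proof.
move=> s_uniq sP; rewrite -size_filter uniq_leq_size // => k ks.
rewrite mem_filter; apply/andP; split; first exact: sP.
by rewrite mem_iota ltnS (bigD1_seq k) //= leq_addr.
Qed.

Local Close Scope classical_set_scope.

Section QRstep.
Variables (R : realType) (n : nat) (lam : 'I_n.+1 -> R) (f : R -> R) (p : {poly R}).
Hypothesis lam_inj : injective lam.
Hypothesis p_interp : forall i, p.[lam i] = f (lam i).
Hypothesis f_neq0 : forall i, f (lam i) != 0.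
Hypothesis f_abs_inj : forall i j, i != j -> `|f (lam i)| != `|f (lam j)|.
Implicit Types (T Q : 'M[R]_n.+1).

Local Notation sym_spectrum := (sym_spectrum lam).

Lemma horner_mx_sym T : sym_spectrum T -> (horner_mx T p)^T = horner_mx T p.
Proof. by case=> sT _; rewrite trmx_horner_mx sT. Qed.

Lemma QRstep_qr T : sym_spectrum T -> exists Q Rm,
  [/\ orthogonal_mx Q, upper_pos_mx Rm, horner_mx T p = Q *m Rm
    & QRstep f T = Q^T *m T *m Q].
Proof.
move=> sT; have := qr_exists (horner_mx_unit lam_inj p_interp sT f_neq0).
move=> /(epsilon_spec (inhabits 1%:M))[oQ [Rm [uR fTE]]].
exists (qrQ (horner_mx T p)), Rm; split => //.
by rewrite /QRstep (funcalc_horner lam_inj p_interp sT).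
Qed.

Lemma sym_spectrum_QRstep T : sym_spectrum T -> sym_spectrum (QRstep f T).
Proof.
by move=> sT; have [Q [Rm [oQ _ _ ->]]] := QRstep_qr sT; apply: sym_spectrum_orth_conj.
Qed.

Definition potential T := wtrace (horner_mx T (p ^+ 2)).

Lemma potential_tr_mul T : sym_spectrum T ->
  potential T = wtrace ((horner_mx T p)^T *m horner_mx T p).
Proof. by move=> sT; rewrite /potential rmorphXn /= horner_mx_sym // expr2. Qed.

Lemma potential_mul_tr T : sym_spectrum T ->
  potential T = wtrace (horner_mx T p *m (horner_mx T p)^T).
Proof. by move=> sT; rewrite /potential rmorphXn /= horner_mx_sym // expr2. Qed.

Lemma potential_QRstep T : sym_spectrum T -> exists Q, orthogonal_mx Q /\
  potential (QRstep f T) + offdiag (Q^T *m horner_mx T p) <= potential T.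
Proof.
move=> sT; have [Q [Rm [oQ [uR _] fTE FTE]]] := QRstep_qr sT.
have QQt := orthogonal_mxC oQ.
have fFTE : horner_mx (QRstep f T) p = Rm *m Q.
  by rewrite FTE horner_mx_orth_conj // fTE mulmxA oQ mul1mx.
exists Q; split => //; rewrite fTE mulmxA oQ mul1mx.
rewrite (potential_tr_mul sT) (potential_mul_tr (sym_spectrum_QRstep sT)) fFTE fTE.
rewrite !trmx_mul -!mulmxA (mulmxA Q) QQt mul1mx (mulmxA Q^T) oQ mul1mx.
exact: wtrace_upper_gap uR.
Qed.

Lemma potential_ge0 T : sym_spectrum T -> 0 <= potential T.
Proof. by move=> sT; rewrite (potential_mul_tr sT) wtrace_mul_tr_ge0. Qed.

Lemma potential_le T : sym_spectrum T ->
  potential T <= n.+1%:R * \sum_i f (lam i) ^+ 2.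
Proof.
move=> sT; rewrite (potential_mul_tr sT).
apply: le_trans (wtrace_mul_tr_le _) _; rewrite horner_mx_sym // mulmxE -rmorphM.
have [P [oP /= TE]] := sym_spectrum_diag lam_inj sT.
rewrite TE horner_mx_orth_conj // horner_mx_diag mxtrace_mulC mulmxA.
rewrite (orthogonal_mxC oP) mul1mx mxtrace_diag.
apply: ler_wpM2l => //; apply: ler_sum => i _.
by rewrite !mxE -expr2 horner_exp p_interp.
Qed.

(* [f(T)^2] is diagonal with the distinct eigenvalues [f(lam i)^2], and [T]
   commutes with it. *)
Lemma offdiag_qr_eq0 T Q : sym_spectrum T -> orthogonal_mx Q ->
  offdiag (Q^T *m horner_mx T p) = 0 -> is_diag_mx T.
Proof.
move=> sT oQ /offdiag_eq0/diag_mxP[d dE].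
pose e := \row_j d 0 j ^+ 2.
have fT2 : horner_mx T (p ^+ 2) = diag_mx e.
  have fTE : horner_mx T p = Q *m diag_mx d.
    by rewrite -dE mulmxA (orthogonal_mxC oQ) mul1mx.
  rewrite rmorphXn /= expr2 -[X in X * _]horner_mx_sym // fTE -mulmxE trmx_mul.
  rewrite -mulmxA (mulmxA Q^T) oQ mul1mx tr_diag_mx mulmx_diag.
  by congr diag_mx; apply/rowP => j; rewrite !mxE expr2.
apply: (@comm_diag_mx_is_diag _ _ e); last by rewrite -fT2; apply: comm_mx_horner.
apply: (@fin_cover_inj _ _ _ (fun i => f (lam i) ^+ 2)).
  move=> i j /= fij; apply/eqP; apply: contraT => ij.
  by have := f_abs_inj ij; rewrite -!sqrtr_sqr fij eqxx.
move=> i; apply/eigenvalue_diag_mx; rewrite -fT2 -p_interp -horner_exp.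
by apply: eigenvalue_horner_mx; apply/sT.2; exists i.
Qed.

Variable K : set 'M[R]_n.+1.
Hypothesis K_compact : compact K.
Hypothesis K_spectrum : forall T, K T -> sym_spectrum T.
Hypothesis K_nondiag : forall T, K T -> ~~ is_diag_mx T.

Lemma offdiag_qr_lower_bound : exists2 d, 0 < d &
  forall T Q, K T -> orthogonal_mx Q -> d <= offdiag (Q^T *m horner_mx T p).
Proof.
pose g (y : 'M[R]_n.+1 * 'M[R]_n.+1) := offdiag (y.2^T *m horner_mx y.1 p).
have cg : continuous g.
  apply/continuous_offdiag/continuous_entriesM.
    exact/continuous_entries_tr/continuous_entries_snd.
  exact/continuous_entries_horner/continuous_entries_fst.
have cKO := compact_setX K_compact (@compact_orthogonal R n.+1).
have [|d d_gt0 d_le] := compact_gt0_lower_bound cKO cg.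
  move=> [T Q] [/= KT oQ]; rewrite lt_def offdiag_ge0 andbT.
  apply: contraNneq (K_nondiag KT); rewrite /g /= => g0.
  exact: (offdiag_qr_eq0 (K_spectrum KT) oQ g0).
by exists d => // T Q KT oQ; apply: (d_le (T, Q)).
Qed.

Lemma QRstep_visits_le : exists2 d, 0 < d & forall T, sym_spectrum T -> forall m,
  d * (count (fun k => `[< K (iter k (QRstep f) T) >]) (iota 0 m))%:R <=
    n.+1%:R * \sum_i f (lam i) ^+ 2.
Proof.
have [d d_gt0 d_le] := offdiag_qr_lower_bound; exists d => // T sT m.
pose w k := potential (iter k (QRstep f) T).
have s_iter k : sym_spectrum (iter k (QRstep f) T).
  by elim: k => //= k; apply: sym_spectrum_QRstep.
have desc k : w k.+1 + d * `[< K (iter k (QRstep f) T) >]%:R <= w k.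
  have [Q [oQ desc]] := potential_QRstep (s_iter k).
  apply: le_trans desc; rewrite lerD2l; case: asboolP => [Kk|_].
    by rewrite mulr1 d_le.
  by rewrite mulr0 offdiag_ge0.
have := count_descent_le m desc.
have := potential_ge0 (s_iter m); have := potential_le sT.
by rewrite /w /=; lra.
Qed.

End QRstep.

Unset Implicit Arguments.

Theorem corollary2p8 (R : realType) (n : nat) (lam : 'I_n -> R) (f : R -> R)
  (Kset : set 'M[R]_n) :
  (forall i j : 'I_n, (i < j)%N -> lam i < lam j) ->
  (forall i : 'I_n, f (lam i) != 0) ->
  (forall i j : 'I_n, i != j -> `|f (lam i)| != `|f (lam j)|) ->
  compact Kset ->
  (forall A, Kset A -> TLambda lam A) ->
  (forall A, Kset A -> ~~ is_diag_mx A) ->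
  exists K : nat, (0 < K)%N /\
    forall T, TLambda lam T ->
      forall s : seq nat, uniq s ->
        (forall k, k \in s -> Kset (iter k (QRstep f) T)) ->
        (size s < K)%N.
Proof.
case: n lam Kset => [|n] lam Kset lam_lt f_neq0 f_abs_inj cK KT Kd.
  (* every [0 x 0] matrix is diagonal, so [Kset] is empty *)
  exists 1%N; split=> // T _ [|k s] // _ /(_ k (mem_head _ _)) /Kd.
  by move/is_diag_mxP; case; case.
have lam_inj : injective lam.
  move=> i j eq_ij; apply/eqP; apply: contraT; rewrite neq_ltn.
  by case/orP => /lam_lt; rewrite eq_ij ltxx.
have [p p_interp] := interpolation f lam_inj.
have KS T : Kset T -> sym_spectrum lam T by move/KT/TLambda_sym_spectrum.
have [d d_gt0 visits] := QRstep_visits_le lam_inj p_interp f_neq0 f_abs_inj cK KS Kd.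
pose B := n.+1%:R * \sum_i f (lam i) ^+ 2.
have B_ge0 : 0 <= B by rewrite mulr_ge0 // sumr_ge0 // => i _; rewrite sqr_ge0.
exists (Num.truncn (B / d)).+1; split => // T /TLambda_sym_spectrum sT s s_uniq sK.
pose visit k := `[< Kset (iter k (QRstep f) T) >].
have s_visits : {subset s <= visit} by move=> k /sK Kk; exact/asboolP.
rewrite ltnS (leq_trans (uniq_size_le_count s_uniq s_visits)) //.
rewrite truncn_ge_nat; last by rewrite divr_ge0 // ltW.
by rewrite ler_pdivlMr // mulrC visits.
Qed.
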